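(* Let $N\ge 3$, $b\ge 1$ an integer, $\gamma>0$, and let $C\in\mathbb{R}^{N\times N}$ be a circulant matrix with $C\mathbb{1}=0$ and $r=\operatorname{rank}(C)$. Consider the plant $\dot x=u+w$, $z=\begin{bmatrix}C\\0\end{bmatrix}x+\begin{bmatrix}0\\ \gamma I\end{bmatrix}u$ with $x,u,w\in\mathbb{R}^N$ (one scalar state per node of the ring $\mathbb{Z}_N$), in feedback with a state-feedback controller $u=Kx$, $K$ a proper rational $N\times N$ transfer matrix, with closed-loop maps $\Phi_x=(sI-K)^{-1}$, $\Phi_u=K(sI-K)^{-1}$ and closed loop $\mathcal{F}(P;K)=\begin{bmatrix}C\Phi_x\\ \gamma\Phi_u\end{bmatrix}$ from $w$ to $z$. If $r>2b+1$, then there is no controller $K$ such that simultaneously: $K\mathbb{1}=0$; $\Phi_x,\Phi_u$ are strictly proper; $\Phi_x,\Phi_u$ are TF-structured with respect to $\mathcal{A}^{(b)}$; and $\mathcal{F}(P;K)$ is stable (has finite $\mathcal{H}_2$ norm). Equivalently, every relative controller that is closed-loop TF-structured with respect to $\mathcal{A}^{(b)}$ yields an unstable $\mathcal{F}(P;K)$.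
   Context: $\mathbb{1}$ is the all-ones vector. $\mathcal{A}^{(b)}$ is the $N\times N$ 0/1 matrix with $\mathcal{A}^{(b)}_{ij}=1$ iff the circular distance $\min(|i-j|,N-|i-j|)$ is at most $b$ (nodes within $b$ hops on the ring with nearest-neighbor edges). A transfer matrix $\Phi$ is TF-structured with respect to $\mathcal{A}^{(b)}$ if $\Phi_{ij}(s)\equiv 0$ whenever $\mathcal{A}^{(b)}_{ij}=0$. *)

From HB Require Import structures.
From mathcomp Require Import all_boot all_order all_algebra.
From mathcomp Require Import fraction.
From mathcomp Require Import complex.
From mathcomp Require Import reals.
Set Implicit Arguments. Unset Strict Implicit. Unset Printing Implicit Defensive.
Import Order.TTheory GRing.Theory Num.Theory.
Local Open Scope ring_scope.

Section Defs.
Variable R : realType.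

Definition tf := {fraction {poly R}}.

Definition tfpoly (p : {poly R}) : tf := @FracField.tofrac _ p.
Definition tfconst (r : R) : tf := tfpoly r%:P.
Definition tfs : tf := tfpoly 'X.

Definition proper_tf (f : tf) : Prop :=
  exists p q : {poly R}, q != 0 /\ f = tfpoly p / tfpoly q /\ (size p <= size q)%N.
Definition strictly_proper_tf (f : tf) : Prop :=
  exists p q : {poly R}, q != 0 /\ f = tfpoly p / tfpoly q /\ (size p < size q)%N.

Definition hurwitz (q : {poly R}) : Prop :=
  forall z : R[i], 0 <= Re z -> (map_poly (fun x : R => (x%:C)%C) q).[z] != 0.

(* stable = in RH2: strictly proper with all poles in the open left half
   plane (equivalently, finite H2 norm) *)
Definition stable_tf (f : tf) : Prop :=
  exists p q : {poly R}, q != 0 /\ f = tfpoly p / tfpoly q /\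
    (size p < size q)%N /\ hurwitz q.

Definition mx_all {m n} (P : tf -> Prop) (M : 'M[tf]_(m, n)) : Prop :=
  forall i j, P (M i j).

End Defs.

Definition circdist (N : nat) (i j : nat) : nat :=
  let d := (maxn i j - minn i j)%N in minn d (N - d).

Definition Ab (N b : nat) : 'M[nat]_N :=
  \matrix_(i < N, j < N) (if (circdist N i j <= b)%N then 1%N else 0%N).

Definition tf_structured (R : realType) (N : nat) (A : 'M[nat]_N)
  (Phi : 'M[tf R]_N) : Prop :=
  forall i j : 'I_N, A i j = 0%N -> Phi i j = 0.

Definition circulant (R : realType) (N : nat) (C : 'M[R]_N) : Prop :=
  forall i j k l : 'I_N, ((j + N - i) %% N = (l + N - k) %% N)%N -> C i j = C k l.

Definition Phi_x (R : realType) (N : nat) (K : 'M[tf R]_N) : 'M[tf R]_N :=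
  invmx ((tfs R)%:M - K).
Definition Phi_u (R : realType) (N : nat) (K : 'M[tf R]_N) : 'M[tf R]_N :=
  K *m Phi_x K.

Definition closed_loop (R : realType) (N : nat) (C : 'M[R]_N) (gamma : R)
  (K : 'M[tf R]_N) : 'M[tf R]_(N + N, N) :=
  col_mx (map_mx (@tfconst R) C *m Phi_x K) (tfconst gamma *: Phi_u K).

(* If sI - K were singular, [invmx] would return it unchanged and the entry
   s - K_00 of Phi_x would have to be strictly proper; so Phi_x = (sI - K)^-1
   and Phi_u = s Phi_x - I. Stability of gamma Phi_u and of C Phi_x makes both
   regular at s = 0, so the residue M0 := (s Phi_x)(0) = Phi_u(0) + I exists,
   C M0 = (s C Phi_x)(0) = 0, M0 1 = 1 because K 1 = 0, and M0 vanishes outside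
   the band A^(b). A nonzero column of M0 is then a kernel vector of the
   circulant C supported on 2b + 1 consecutive nodes, and its N - 2b cyclic
   shifts are independent kernel vectors, whence rank C <= 2b. *)

From HB Require Import structures.
From mathcomp Require Import all_boot all_order all_algebra.
From mathcomp Require Import fraction complex reals.
From mathcomp Require Import zify.
Import Order.TTheory GRing.Theory Num.Theory.
Set Implicit Arguments.
Unset Strict Implicit.
Unset Printing Implicit Defensive.
Local Open Scope ring_scope.

Lemma size_cross_sum_lt (F : idomainType) (p q p' q' : {poly F}) :
  q != 0 -> q' != 0 -> (size p <= size q)%N -> (size p' < size q')%N ->
  (size (p * q' + p' * q)%R < size ('X * q * q')%R)%N.
Proof.
move=> q_neq0 q'_neq0 pq p'q'.
rewrite -mulrA (mulrC 'X) size_mulX ?mulf_neq0 // size_mul // ltnS.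
apply: leq_trans (size_polyD _ _) _; rewrite geq_max.
have := size_mul_leq p q'; have := size_mul_leq p' q.
have := size_poly_gt0 q; have := size_poly_gt0 q'; rewrite q_neq0 q'_neq0.
lia.
Qed.

Section TransferFunctions.
Variable R : realType.
Implicit Types (f g : tf R) (p q : {poly R}) (x c d : R).

Lemma tfpoly1 : tfpoly 1 = 1 :> tf R. Proof. exact: rmorph1. Qed.
Lemma tfpolyD : {morph @tfpoly R : p q / p + q}. Proof. exact: rmorphD. Qed.
Lemma tfpolyM : {morph @tfpoly R : p q / p * q}. Proof. exact: rmorphM. Qed.

Lemma tfconstM : {morph @tfconst R : a b / a * b}.
Proof. by move=> a b; rewrite /tfconst polyCM; exact: rmorphM. Qed.

Lemma tfconst_nat k : tfconst (k%:R : R) = k%:R.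
Proof. by rewrite /tfconst polyC_natr; exact: rmorph_nat. Qed.

Lemma tfpoly_inj : injective (@tfpoly R).
Proof. by move=> p q /eqP; rewrite tofrac_eq => /eqP. Qed.

Definition regular_at x f c :=
  exists p q, q.[x] != 0 /\ f = tfpoly p / tfpoly q /\ p.[x] = c * q.[x].

Lemma tfpoly_neq0 p x : p.[x] != 0 -> tfpoly p != 0.
Proof. by apply: contra; rewrite tofrac_eq0 => /eqP ->; rewrite horner0. Qed.

Lemma regular_at_uniq x f c d : regular_at x f c -> regular_at x f d -> c = d.
Proof.
move=> [p [q [qx [-> pc]]]] [p' [q' [q'x [e p'd]]]].
have /tfpoly_inj/(congr1 (horner^~ x)) : tfpoly (p * q') = tfpoly (p' * q).
  rewrite !tfpolyM /= -[tfpoly p](divfK (tfpoly_neq0 qx)) e.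
  by rewrite mulrAC divfK // (tfpoly_neq0 q'x).
rewrite !hornerM pc p'd => h.
by apply: (mulIf qx); apply: (mulIf q'x); rewrite h mulrAC.
Qed.

Lemma regular_atD x f g c d :
  regular_at x f c -> regular_at x g d -> regular_at x (f + g) (c + d).
Proof.
move=> [p [q [qx [-> pc]]]] [p' [q' [q'x [-> p'd]]]].
exists (p * q' + p' * q), (q * q'); split; first by rewrite hornerM mulf_neq0.
split; last by rewrite hornerD !hornerM pc p'd mulrDl !mulrA [d * _ * _]mulrAC.
by rewrite (addf_div _ _ (tfpoly_neq0 qx) (tfpoly_neq0 q'x)) tfpolyD !tfpolyM.
Qed.

Lemma regular_atM x f g c d :
  regular_at x f c -> regular_at x g d -> regular_at x (f * g) (c * d).
Proof.
move=> [p [q [qx [-> pc]]]] [p' [q' [q'x [-> p'd]]]].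
exists (p * p'), (q * q'); split; first by rewrite hornerM mulf_neq0.
split; first by rewrite tfpolyM tfpolyM mulf_div.
by rewrite !hornerM pc p'd mulrACA.
Qed.

Lemma regular_at_poly x p : regular_at x (tfpoly p) p.[x].
Proof.
exists p, 1; rewrite hornerC oner_neq0 tfpoly1 divr1 mulr1.
by split.
Qed.

Lemma regular_at_const x a : regular_at x (tfconst a) a.
Proof. by have := regular_at_poly x a%:P; rewrite hornerC. Qed.

Lemma regular_at_nat x k : regular_at x k%:R k%:R.
Proof. by rewrite -tfconst_nat; exact: regular_at_const. Qed.

Lemma regular_at_s x : regular_at x (tfs R) x.
Proof. by have := regular_at_poly x 'X; rewrite hornerX. Qed.

Lemma regular_at_sum x (I : finType) (F : I -> tf R) (c : I -> R) :
  (forall i, regular_at x (F i) (c i)) -> regular_at x (\sum_i F i) (\sum_i c i).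
Proof.
move=> Fc; elim/big_rec2: _ => [|i f e _]; last exact: regular_atD.
exact: regular_at_nat x 0.
Qed.

Lemma stable_regular_at x f : 0 <= x -> stable_tf f -> exists c, regular_at x f c.
Proof.
move=> x_ge0 [p [q [_ [-> [_ q_hurwitz]]]]].
have qx : q.[x] != 0.
  have := q_hurwitz (x%:C)%C; rewrite -complexRe ler0c => /(_ x_ge0).
  by rewrite horner_map; apply: contra => /eqP ->.
exists (p.[x] / q.[x]), p, q; do 2!split => //.
by rewrite divfK.
Qed.

Lemma s_sub_proper_not_strictly_proper f :
  proper_tf f -> ~ strictly_proper_tf (tfs R - f).
Proof.
move=> [p [q [q0 [-> pq]]]] [p' [q' [q'0 [e p'q']]]].
have {e} E : 'X * q * q' = p * q' + p' * q.
  have sE : tfs R = tfpoly p / tfpoly q + tfpoly p' / tfpoly q'.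
    by rewrite -e addrC subrK.
  have [q_neq0 q'_neq0] : tfpoly q != 0 /\ tfpoly q' != 0 by rewrite !tofrac_eq0.
  apply: tfpoly_inj; rewrite !tfpolyM tfpolyD !tfpolyM -/(tfs R) sE !mulrDl.
  by rewrite (divfK q_neq0) [_ / _ * _ * _]mulrAC (divfK q'_neq0).
by have := size_cross_sum_lt q0 q'0 pq p'q'; rewrite E ltnn.
Qed.

End TransferFunctions.

Section CyclicShifts.
Variable n : nat.
Local Notation N := n.+1.

Lemma val_subZp (x y : 'I_N) : (y <= x)%N -> val (x - y) = (x - y)%N.
Proof.
move=> le_yx; have le_yN := ltnW (ltn_ord y).
rewrite /= modnDmr addnBA //.
rewrite -addnBAC // modnDr modn_small //.
exact: leq_ltn_trans (leq_subr y x) (ltn_ord x).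
Qed.

Definition cyclic_shifts (F : nzRingType) m (v : 'cV[F]_N) : 'M[F]_(m, N) :=
  \matrix_(k < m, i < N) v (i - inZp k) 0.

Lemma row_free_cyclic_shifts (F : fieldType) (v : 'cV[F]_N) w :
  v != 0 -> (forall i : 'I_N, (w <= i)%N -> v i 0 = 0) ->
  row_free (cyclic_shifts (N - w).+1 v).
Proof.
move=> v_neq0 v_supp; set m := (N - w).+1.
have [i0 vi0] : exists i0, v i0 0 != 0.
  apply/existsP; apply: contraR v_neq0 => /existsPn v0.
  by apply/eqP/matrixP => i j; rewrite ord1 mxE; apply/eqP/negPn/v0.
have [L vL L_max] := @arg_maxnP _ i0 (fun i => v i 0 != 0) (@nat_of_ord N) vi0.
have L_lt_w : (L < w)%N by rewrite ltnNge; apply: contra vL => /v_supp ->.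
have Lk_lt (k : 'I_m) : (L + k < N)%N.
  by have := ltn_ord k; have := ltn_ord L; rewrite /m; lia.
(* With L the last index where v is nonzero, the columns L + k' of the first
   m shifts form a lower triangular minor with diagonal v_L. *)
pose f (k' : 'I_m) := Ordinal (Lk_lt k').
pose S := colsub f (cyclic_shifts m v).
have SE (k k' : 'I_m) : (k <= k')%N ->
    S k k' = v (inZp (L + k' - k)) 0.
  move=> le_kk'; rewrite !mxE; congr (v _ 0); apply: val_inj.
  have := Lk_lt k; have := Lk_lt k' => Lk_lt_N Lk'_lt_N.
  rewrite val_subZp /= !modn_small //; lia.
have S_trig : is_trig_mx S.
  apply/is_trig_mxP => k k' lt_kk'; rewrite SE; last exact: ltnW.
  have Lk'_lt_N := Lk_lt k'; apply/eqP; apply: contraTT lt_kk' => /L_max /=.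
  by rewrite modn_small; lia.
have S_unit : S \in unitmx.
  rewrite unitmxE unitfE det_trig // prodf_seq_neq0; apply/allP => k _ /=.
  by rewrite SE // addnK valZpK.
rewrite /row_free eqn_leq rank_leq_row /=.
apply: leq_trans (mxrankM_maxl _ (colsub f 1%:M)).
by rewrite mulmx_colsub mulmx1 mxrank_unit.
Qed.
End CyclicShifts.

Section Circulant.
Variables (R : realType) (n : nat).
Local Notation N := n.+1.
Variable C : 'M[R]_N.
Hypothesis C_circ : circulant C.

Lemma circulantE (i j : 'I_N) : C i j = C 0 (j - i).
Proof.
apply: C_circ => /=.
by rewrite subn0 modnDr modn_mod modnDmr addnBA // ltnW.
Qed.

Lemma circulant_shift (i j t : 'I_N) : C (i + t) (j + t) = C i j.
Proof. by rewrite circulantE [RHS]circulantE opprD addrACA subrr addr0. Qed.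

Lemma circulant_ker_shift (v : 'cV[R]_N) (t : 'I_N) :
  C *m v = 0 -> C *m (\col_i v (i + t) 0) = 0.
Proof.
move=> Cv; apply/matrixP => i k; rewrite [k]ord1 !mxE.
have /matrixP/(_ (i + t) 0) := Cv; rewrite !mxE => Cv_i.
rewrite -[RHS]Cv_i [LHS](reindex_inj (addIr (- t))); apply: eq_bigr => j _.
by rewrite !mxE subrK -(circulant_shift i (j - t) t) subrK.
Qed.

Lemma circulant_rank_lt_window (a : 'I_N) (v : 'cV[R]_N) w :
  C *m v = 0 -> v != 0 -> (forall i : 'I_N, (w <= i)%N -> v (i + a) 0 = 0) ->
  (\rank C < w)%N.
Proof.
move=> Cv v_neq0 v_supp; set u := \col_i v (i + a) 0.
have u_neq0 : u != 0.
  apply: contraNneq v_neq0 => u0; apply/eqP/matrixP => i k.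
  by have /matrixP/(_ (i - a) k) := u0; rewrite !mxE ord1 subrK.
have u_supp (i : 'I_N) : (w <= i)%N -> u i 0 = 0 by rewrite mxE; exact: v_supp.
have : (cyclic_shifts (N - w).+1 u <= kermx C^T)%MS.
  apply/sub_kermxP/matrixP => k l; rewrite !mxE.
  have /matrixP/(_ l 0) := circulant_ker_shift (a - inZp k) Cv.
  rewrite !mxE => Cv_l.
  by rewrite -[RHS]Cv_l; apply: eq_bigr => i _; rewrite !mxE mulrC addrAC addrA.
move/mxrankS; rewrite (eqP (row_free_cyclic_shifts u_neq0 u_supp)).
by rewrite mxrank_ker mxrank_tr; have := rank_leq_row C; lia.
Qed.
End Circulant.

Lemma circdist_window n (j k : 'I_n.+1) b :
  (2 * b < k)%N -> (b < circdist n.+1 (k + (j - inZp b))%R j)%N.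
Proof.
move=> b_lt_k; have := ltn_ord k; have := ltn_ord j => j_lt k_lt.
have -> : val (k + (j - inZp b)) = ((k + j + n.+1 - b) %% n.+1)%N.
  rewrite /= modnDmr addnA modnDmr [(b %% _)%N]modn_small; last lia.
  by rewrite addnBA; last lia.
have := divn_eq (k + j + n.+1 - b) n.+1.
have := ltn_pmod (k + j + n.+1 - b) (ltn0Sn n).
have : ((k + j + n.+1 - b) %/ n.+1 < 3)%N by rewrite ltn_divLR //; lia.
case: (_ %/ _)%N => [|[|[|q]]] //= _; rewrite /circdist; lia.
Qed.

Section ClosedLoop.
Variables (R : realType) (n : nat).
Local Notation N := n.+1.
Variable K : 'M[tf R]_N.
Local Notation X := (Phi_x K).

Lemma s_sub_unitmx :
  mx_all (@proper_tf R) K -> mx_all (@strictly_proper_tf R) X ->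
  (tfs R)%:M - K \in unitmx.
Proof.
move=> K_proper X_sproper; apply: contraT => not_unit.
case: (s_sub_proper_not_strictly_proper (K_proper 0 0)).
by have := X_sproper 0 0; rewrite /Phi_x (invmx_out not_unit) !mxE eqxx mulr1n.
Qed.

Hypothesis A_unit : (tfs R)%:M - K \in unitmx.

Lemma Phi_uE : Phi_u K = tfs R *: X - 1%:M.
Proof.
have KE : K = (tfs R)%:M - ((tfs R)%:M - K) by rewrite opprB addrC subrK.
by rewrite /Phi_u {1}KE mulmxBl mul_scalar_mx (mulmxV A_unit).
Qed.

Lemma residue0_exists (C : 'M[R]_N) gamma :
  gamma != 0 -> mx_all (@stable_tf R) (closed_loop C gamma K) ->
  exists M0 : 'M[R]_N, forall i j, regular_at 0 (tfs R * X i j) (M0 i j).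
Proof.
move=> gamma_neq0 F_stable.
have reg_sX i j : exists c, regular_at 0 (tfs R * X i j) c.
  have := F_stable (rshift N i) j; rewrite /closed_loop col_mxEd mxE.
  move=> /(stable_regular_at (lexx 0)) [c gPu_c].
  exists (gamma^-1 * c + (i == j)%:R).
  have -> : tfs R * X i j =
      tfconst gamma^-1 * (tfconst gamma * Phi_u K i j) + (i == j)%:R.
    rewrite mulrA -tfconstM mulVf // (tfconst_nat R 1) mul1r.
    by rewrite Phi_uE !mxE subrK.
  apply: regular_atD (regular_at_nat _ _).
  exact: regular_atM (regular_at_const _ _) gPu_c.
have [M0 M0E] := fin_all_exists (fun i => fin_all_exists (reg_sX i)).
by exists (\matrix_(i, j) M0 i j) => i j; rewrite mxE.
Qed.

Variable M0 : 'M[R]_N.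
Hypothesis M0E : forall i j, regular_at 0 (tfs R * X i j) (M0 i j).

Lemma residue0_ker (C : 'M[R]_N) gamma :
  mx_all (@stable_tf R) (closed_loop C gamma K) -> C *m M0 = 0.
Proof.
move=> F_stable; apply/matrixP => l j; rewrite mxE [RHS]mxE.
have := F_stable (lshift N l) j; rewrite /closed_loop col_mxEu.
move=> /(stable_regular_at (lexx 0)) [c CX_c].
apply: (@regular_at_uniq _ 0 (tfs R * (map_mx (@tfconst R) C *m X) l j)).
  rewrite mxE mulr_sumr; apply: regular_at_sum => i; rewrite mxE mulrCA.
  exact: regular_atM (regular_at_const _ _) (M0E i j).
by have := regular_atM (regular_at_s _) CX_c; rewrite mul0r.
Qed.

Lemma residue0_row_sum :
  K *m (const_mx 1 : 'cV_N) = 0 -> forall i, \sum_j M0 i j = 1.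
Proof.
move=> K1 i; have : X *m ((tfs R)%:M - K) *m const_mx 1 = const_mx 1 :> 'cV_N.
  by rewrite mulVmx // mul1mx.
rewrite -mulmxA mulmxBl K1 subr0 mul_scalar_mx -scalemxAr.
move=> /matrixP/(_ i 0); rewrite !mxE mulr_sumr => sX1.
have sX_eq1 : \sum_j tfs R * X i j = 1.
  by rewrite -[RHS]sX1; apply: eq_bigr => j _; rewrite mxE mulr1.
have := regular_at_sum (M0E i); rewrite sX_eq1 => sX_1.
exact: regular_at_uniq sX_1 (regular_at_nat 0 1).
Qed.

Lemma residue0_band b :
  tf_structured (Ab N b) X ->
  forall i j : 'I_N, (b < circdist N i j)%N -> M0 i j = 0.
Proof.
move=> X_struct i j far; apply: (regular_at_uniq (M0E i j)).
rewrite X_struct; last by rewrite mxE leqNgt far.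
by rewrite mulr0; exact: regular_at_nat 0 0.
Qed.
End ClosedLoop.

Theorem theorem2 (R : realType) (N b : nat) (gamma : R) (C : 'M[R]_N) :
  (3 <= N)%N -> (1 <= b)%N -> 0 < gamma ->
  circulant C -> C *m (const_mx 1 : 'cV[R]_N) = 0 ->
  (2 * b + 1 < \rank C)%N ->
  ~ exists K : 'M[tf R]_N,
      mx_all (@proper_tf R) K /\
      K *m (const_mx 1 : 'cV[tf R]_N) = 0 /\
      mx_all (@strictly_proper_tf R) (Phi_x K) /\
      mx_all (@strictly_proper_tf R) (Phi_u K) /\
      tf_structured (Ab N b) (Phi_x K) /\
      tf_structured (Ab N b) (Phi_u K) /\
      mx_all (@stable_tf R) (closed_loop C gamma K).
Proof.
case: N C => [//|n] C _ _ gamma_gt0 C_circ _ rank_C.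
move=> [K [K_proper [K1 [X_sproper [_ [X_struct [_ F_stable]]]]]]].
have A_unit := s_sub_unitmx K_proper X_sproper.
have [M0 M0E] := residue0_exists A_unit (lt0r_neq0 gamma_gt0) F_stable.
have [j M0_0j] : exists j, M0 0 j != 0.
  apply/existsP; apply: contraT => /existsPn M0_0.
  rewrite -(oner_eq0 R) -(residue0_row_sum A_unit M0E K1 0) big1 // => j _.
  exact/eqP/negPn/M0_0.
have col_ker : C *m col j M0 = 0.
  rewrite colEsub mulmx_colsub (residue0_ker M0E F_stable).
  by apply/matrixP => i k; rewrite !mxE.
have col_neq0 : col j M0 != 0.
  by apply: contraNneq M0_0j => /matrixP/(_ 0 0); rewrite !mxE => ->.
have col_supp (i : 'I_n.+1) :
    (2 * b + 1 <= i)%N -> col j M0 (i + (j - inZp b)) 0 = 0.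
  rewrite addn1 mxE => b_lt_i.
  by rewrite (residue0_band M0E X_struct) // circdist_window.
have := circulant_rank_lt_window C_circ col_ker col_neq0 col_supp.
by rewrite ltnNge (ltnW rank_C).
Qed.
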